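(* Fix $\epsilon>0$ and suppose that, along a run of the RD-Tracking-TMCTS sampling rule, there exists a positive integer $t_0$ such that $|w^{s_0}_\ell(\hat{\bm{\mu}}(t))-w^{s_0}_\ell(\bm{\mu})|\le\epsilon$ for all $t\ge t_0$ and all $\ell\in\mathcal{L}(\mathcal{T})$. Then there exists a positive integer $t_1\ge t_0$ such that \[\max_{\ell\in\mathcal{L}(\mathcal{T})}\Big|\frac{N_\ell(t)}{t}-w^{s_0}_\ell(\bm{\mu})\Big|\le2(|\mathcal{L}(\mathcal{T})|-1)\epsilon\quad\text{for all }t\ge t_1.\]
   Context: $\mathcal{T}$: finite rooted tree with root $s_0$, children $\mathcal{C}(s)$, leaves $\mathcal{L}(\mathcal{T})$, $\mathcal{D}(s)$ leaves descending from $s$; internal labels $L(s)\in\{\text{MAX},\text{MIN}\}$. $X\subseteq\mathbb{R}$ mean-parameter set of a one-parameter exponential family, $d(x,y)$ KL divergence, threshold $\theta\in X$. $V_s(\bm{\lambda})=\lambda_s$ at leaves, max/min of children's values at MAX/MIN nodes; $a_s=$'win' iff $V_s\ge\theta$. For any mean vector $\bm{\nu}$ the recursive weights are: $a^*=a_{s_0}(\bm{\nu})$; $P=$MAX, $Q=$MIN if $a^*=$'win', swapped if 'lose'. Leaf $s$: $w^s_s=1$, $d_s=d(\nu_s,\theta)$ if ($a^*=$'win', $\nu_s\ge\theta$) or ($a^*=$'lose', $\nu_s<\theta$), else $0$. $L(s)=P$: $d_s=\max_c d_c$, $c^*(s)\in\arg\max_c d_c$, if $d_s>0$: $w^s=w^{c^*(s)}$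 on $\mathcal{D}(c^*(s))$, $0$ elsewhere. $L(s)=Q$, all $d_c>0$: $d_s=(\sum_c1/d_c)^{-1}$, $w^s_\ell=\frac{w^c_\ell/d_c}{\sum_{c'}1/d_{c'}}$ on $\mathcal{D}(c)$. $L(s)=Q$ otherwise: $d_s=0$. Internal $s$ with $d_s=0$: $\bm{w}^s$ arbitrary probability vector. $\bm{\mu}$ is the true mean vector (so $\bm{w}^{s_0}(\bm{\mu})$ is a fixed probability vector). $N_\ell(t)$ is the number of draws of leaf $\ell$ in rounds $1..t$ and $\hat{\bm{\mu}}(t)$ the vector of empirical means. RD-Tracking-TMCTS sampling rule: draw each leaf once; then at round $t$, if some leaf has $N_\ell(t-1)<\sqrt t-|\mathcal{L}(\mathcal{T})|/2$ select $I(t)\in\arg\min_\ell N_\ell(t-1)$, else $I(t)\in\arg\max_\ell w^{s_0}_\ell(\hat{\bm{\mu}}(t-1))/N_\ell(t-1)$. *)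

From HB Require Import structures.
From mathcomp Require Import all_boot all_order all_algebra.
From mathcomp Require Import reals.
Set Implicit Arguments. Unset Strict Implicit. Unset Printing Implicit Defensive.
Import Order.TTheory GRing.Theory Num.Theory.
Local Open Scope ring_scope.

Inductive label := MAX | MIN.
Definition label_eqb (a b : label) : bool :=
  match a, b with MAX, MAX | MIN, MIN => true | _, _ => false end.

Inductive tree (K : nat) : Type :=
| Leaf : 'I_K -> tree K
| Node : label -> forall n : nat, ('I_n.+1 -> tree K) -> tree K.
Arguments Leaf {K}.
Arguments Node {K}.

Fixpoint leaves K (t : tree K) : seq 'I_K :=
  match t with
  | Leaf l => [:: l]
  | Node _ n f => flatten [seq leaves (f i) | i <- enum 'I_n.+1]
  end.

Definition wf_tree K (t : tree K) : bool := perm_eq (leaves t) (enum 'I_K).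

Section Weights.
Variables (R : realType) (K : nat).
Variable (d : R -> R -> R).
Variable (theta : R).
Variable (nu : 'I_K -> R).

Fixpoint value (t : tree K) : R :=
  match t with
  | Leaf l => nu l
  | Node MAX n f => \big[Num.max / value (f ord0)]_(i < n.+1) value (f i)
  | Node MIN n f => \big[Num.min / value (f ord0)]_(i < n.+1) value (f i)
  end.

Definition root_win (t : tree K) : bool := theta <= value t.

Variable win : bool.

(* L(s) = P ? (P = MAX if a^* = win, P = MIN if a^* = lose) *)
Definition isP (L : label) : bool := label_eqb L MAX == win.

Fixpoint dval (t : tree K) : R :=
  match t with
  | Leaf l => if (win && (theta <= nu l)) || (~~ win && (nu l < theta))
              then d (nu l) theta else 0
  | Node L n f =>
      if isP L then \big[Num.max / dval (f ord0)]_(i < n.+1) dval (f i)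
      else if [forall i : 'I_n.+1, 0 < dval (f i)]
           then (\sum_(i < n.+1) (dval (f i))^-1)^-1
           else 0
  end.

(* wvalid t w : w is an admissible weight vector w^t (one of the possibly
   several vectors allowed by the recursive definition, which contains
   arbitrary choices: tie-breaking of the argmax and arbitrary probability
   vectors when d_s = 0).  Vectors are indexed by all leaves 'I_K and
   vanish outside D(t). *)
Fixpoint wvalid (t : tree K) (w : 'I_K -> R) : Prop :=
  match t with
  | Leaf l => forall j, w j = (if j == l then 1 else 0)
  | Node L n f =>
      if 0 < dval (Node L n f) then
        (if isP L then
           exists i : 'I_n.+1,
             dval (f i) = dval (Node L n f) /\
             (forall i', dval (f i') <= dval (f i)) /\
             exists wc : 'I_K -> R, wvalid (f i) wc /\
               forall j, w j = (if j \in leaves (f i) then wc j else 0)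
         else
           exists wc : 'I_n.+1 -> 'I_K -> R,
             (forall i, wvalid (f i) (wc i)) /\
             forall j, w j =
               \sum_(i < n.+1)
                  (if j \in leaves (f i)
                   then (wc i j / dval (f i)) / (\sum_(i' < n.+1) (dval (f i'))^-1)
                   else 0))
      else
        (forall j, 0 <= w j) /\ (\sum_j w j = 1) /\
        (forall j, j \notin leaves (Node L n f) -> w j = 0)
  end.
End Weights.

Definition root_weight (R : realType) K (d : R -> R -> R) (theta : R)
  (T : tree K) (nu : 'I_K -> R) (w : 'I_K -> R) : Prop :=
  wvalid d theta nu (root_win theta nu T) T w.

(* A run: I t is the leaf drawn at round t >= 1, Y t the observation at round t. *)
Definition Ncount K (I : nat -> 'I_K) (l : 'I_K) (t : nat) : nat :=
  \sum_(1 <= s < t.+1) (I s == l).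

Definition muhat (R : realType) K (I : nat -> 'I_K) (Y : nat -> R) (t : nat)
  (l : 'I_K) : R :=
  (\sum_(1 <= s < t.+1 | I s == l) Y s) / (Ncount I l t)%:R.

Definition RD_tracking (R : realType) K (W : ('I_K -> R) -> ('I_K -> R))
  (I : nat -> 'I_K) (Y : nat -> R) : Prop :=
  (forall l, Ncount I l K = 1%N) /\
  (forall t : nat, (K < t)%N ->
     ((exists l, (Ncount I l t.-1)%:R < Num.sqrt (t%:R : R) - K%:R / 2) ->
        forall l, (Ncount I (I t) t.-1 <= Ncount I l t.-1)%N) /\
     (~ (exists l, (Ncount I l t.-1)%:R < Num.sqrt (t%:R : R) - K%:R / 2) ->
        forall l, W (muhat I Y t.-1) l / (Ncount I l t.-1)%:R <=
                  W (muhat I Y t.-1) (I t) / (Ncount I (I t) t.-1)%:R)).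

(* While the plug-in weights are eps-close to w = w^{s0}(mu), a leaf l drawn at
   round t+1 is either forced, so that N_l(t) < sqrt(t+1), or tracked, so that
   the maximality of w^_j / N_j(t) at l gives N_l(t) <= w^_l t <= (w_l + eps) t.
   Hence N_l(t) <= (w_l + eps) t + sqrt t + O(1), and eventually
   N_l(t) <= (w_l + 2 eps) t for every leaf.  The deviations N_l(t)/t - w_l sum
   to zero, so each one is also at least -(|L| - 1) 2 eps. *)

From HB Require Import structures.
From mathcomp Require Import all_boot all_order all_algebra.
From mathcomp Require Import reals.
From mathcomp Require Import lra zify.
Set Implicit Arguments. Unset Strict Implicit. Unset Printing Implicit Defensive.
Import Order.TTheory GRing.Theory Num.Theory.
Local Open Scope ring_scope.

Section RealLemmas.
Variable R : realFieldType.

Lemma le_max_start_envelope (a f : nat -> R) (m : nat) :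
  (forall t, f t <= f t.+1) ->
  (forall t, (m <= t)%N -> a t.+1 <= a t \/ a t.+1 <= f t.+1) ->
  forall t, (m <= t)%N -> a t <= Num.max (a m) (f t).
Proof.
move=> f_incr a_step; elim=> [|t IHt]; first by move=> /[!leqn0] /eqP ->; rewrite le_max lexx.
rewrite leq_eqVlt => /predU1P [<- | le_mt]; first by rewrite le_max lexx.
have IH := IHt le_mt.
case: (a_step t le_mt) => step; apply: (le_trans step).
  exact: le_trans IH (le_max2 (lexx _) (f_incr t)).
by rewrite le_max lexx orbT.
Qed.

Lemma le_mul_sum_of_max_ratio (J : finType) (w n : J -> R) (l : J) :
  \sum_j w j = 1 -> (forall j, 0 < n j) ->
  (forall j, w j / n j <= w l / n l) ->
  n l <= w l * \sum_j n j.
Proof.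
move=> w_sum n_gt0 l_max.
rewrite -[n l]mulr1 -w_sum !mulr_sumr; apply: ler_sum => j _.
have := l_max j.
by rewrite ler_pdivrMr // mulrAC ler_pdivlMr // [n l * _]mulrC.
Qed.

Lemma norm_le_of_sum_eq0 (J : finType) (x : J -> R) (delta : R) (l : J) :
  \sum_j x j = 0 -> (forall j, x j <= delta) -> 0 <= delta ->
  `|x l| <= (#|J|%:R - 1) * delta.
Proof.
move=> x_sum x_le delta_ge0.
have J_gt0 : (0 < #|J|)%N by apply/card_gt0P; exists l.
have natJ : #|J|%:R - 1 = (#|J|.-1)%:R :> R.
  by rewrite -{1}(prednK J_gt0) -natr1 addrK.
have x_l_eq : x l = - \sum_(j | j != l) x j.
  by move: x_sum; rewrite (bigD1 l) //= => /eqP; rewrite addr_eq0 => /eqP.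
have others_le : \sum_(j | j != l) x j <= (#|J|%:R - 1) * delta.
  apply: (@le_trans _ _ (\sum_(j | j != l) delta)); first exact: ler_sum.
  by rewrite sumr_const cardC1 natJ mulr_natl.
rewrite ler_norml {1}x_l_eq lerN2 others_le /=.
case: (ltngtP #|J| 1) => [|J_gt1|J_eq1]; first by lia.
  apply: le_trans (x_le l) _.
  by rewrite ler_peMl // natJ ler1n -ltnS prednK.
have /card0_eq no_other : #|predC1 l| = 0%N by rewrite cardC1 J_eq1.
by rewrite x_l_eq big_pred0 ?J_eq1 ?oppr0 ?subrr ?mul0r // => j; apply: no_other.
Qed.

End RealLemmas.

Lemma eventually_add_sqrt_le (R : realType) (a e : R) : 0 < e ->
  exists T, forall t, (T <= t)%N -> a + Num.sqrt t%:R <= e * t%:R.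
Proof.
move=> e_gt0; set X := (2 * e * `|a| + 1) / e ^+ 2.
have e2_gt0 : 0 < e ^+ 2 by rewrite exprn_gt0.
have X_ge0 : 0 <= X by apply: divr_ge0; [have := normr_ge0 a; nra | exact: ltW].
exists (Num.bound X) => t le_Tt.
have X_le_t : X <= t%:R by apply: le_trans (ltW (archi_boundP X_ge0)) _; rewrite ler_nat.
set s := Num.sqrt t%:R.
have s_sq : s ^+ 2 = t%:R by rewrite sqr_sqrtr.
have amgm : 2 * e * s <= e ^+ 2 * t%:R + 1.
  by have := sqr_ge0 (e * s - 1); rewrite -s_sq; nra.
have large_t : 2 * e * `|a| + 1 <= e ^+ 2 * t%:R.
  by rewrite -ler_pdivrMl // mulrC.
have ea_le : e * a <= e * `|a| := ler_wpM2l (ltW e_gt0) (ler_norm a).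
have two_e_gt0 : 0 < 2 * e by lra.
rewrite -(ler_pM2l two_e_gt0); nra.
Qed.

Section AdmissibleWeights.
Variables (R : realType) (K : nat) (d : R -> R -> R) (theta : R).
Variables (nu : 'I_K -> R) (win : bool).

Lemma wvalid_distribution (t : tree K) (w : 'I_K -> R) :
  wvalid d theta nu win t w ->
  [/\ \sum_j w j = 1, forall j, 0 <= w j & forall j, j \notin leaves t -> w j = 0].
Proof.
elim: t w => [l | L n f IHf] w /=.
  move=> w_leaf; split.
  - by rewrite (eq_bigr _ (fun j _ => w_leaf j)) -big_mkcond big_pred1_eq.
  - by move=> j; rewrite w_leaf; case: (j == l).
  - by move=> j; rewrite inE w_leaf => /negbTE ->.
have not_in_child j i : j \notin flatten [seq leaves (f i) | i <- enum 'I_n.+1] ->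
    j \notin leaves (f i).
  by apply: contra => j_in; apply/flatten_mapP; exists i; rewrite ?mem_enum.
case: ifP => d_gt0; last by case=> w_ge0 [w_sum w_out]; split.
case: ifP => isP_L.
  case=> i [_ [_ [wc [wc_valid w_eq]]]].
  have [wc_sum wc_ge0 wc_out] := IHf i wc wc_valid.
  split.
  - rewrite -wc_sum; apply: eq_bigr => j _; rewrite w_eq.
    by case: ifP => // /negbT /wc_out ->.
  - by move=> j; rewrite w_eq; case: ifP.
  - by move=> j /not_in_child j_out; rewrite w_eq (negbTE (j_out i)).
move: d_gt0; rewrite /= isP_L; case: forallP => [dc_gt0 _ | _]; last by rewrite ltxx.
case=> wc [wc_valid w_eq].
set D := \sum_(i' < n.+1) (dval d theta nu win (f i'))^-1.
have D_gt0 : 0 < D.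
  rewrite /D (bigD1 ord0) //= ltr_pwDl ?invr_gt0 // sumr_ge0 // => i _.
  by rewrite invr_ge0 ltW.
have w_sum_children j :
    w j = \sum_(i < n.+1) (wc i j / dval d theta nu win (f i) / D).
  rewrite w_eq; apply: eq_bigr => i _; case: ifP => // /negbT j_out.
  by have [_ _ ->] := IHf i _ (wc_valid i); rewrite ?mul0r.
split.
- rewrite (eq_bigr _ (fun j _ => w_sum_children j)) exchange_big /=.
  rewrite -[RHS](divff (lt0r_neq0 D_gt0)) mulr_suml; apply: eq_bigr => i _.
  have [wc_sum _ _] := IHf i _ (wc_valid i).
  by rewrite -!mulr_suml wc_sum mul1r.
- move=> j; rewrite w_sum_children sumr_ge0 // => i _.
  have [_ wc_ge0 _] := IHf i _ (wc_valid i).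
  by rewrite !divr_ge0 // ltW.
- by move=> j /not_in_child j_out; rewrite w_eq big1 // => i _; rewrite (negbTE (j_out i)).
Qed.

End AdmissibleWeights.

Lemma leaf_index_gt0 K (t : tree K) : (0 < K)%N.
Proof. by elim: t => [[l lt_lK] | L n f IHf]; [exact: leq_ltn_trans lt_lK | exact: IHf ord0]. Qed.

Section Counts.
Variables (K : nat) (I : nat -> 'I_K).

Lemma NcountS l t : Ncount I l t.+1 = (Ncount I l t + (I t.+1 == l))%N.
Proof. by rewrite /Ncount big_nat_recr. Qed.

Lemma leq_Ncount l : {homo Ncount I l : s t / (s <= t)%N}.
Proof. by apply: homo_leq => [//|s t u /leq_trans|t]; [apply | rewrite NcountS leq_addr]. Qed.

Lemma Ncount_le l t : (Ncount I l t <= t)%N.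
Proof.
elim: t => [|t IHt]; first by rewrite /Ncount big_geq.
by rewrite NcountS -addn1 leq_add ?leq_b1.
Qed.

Lemma sum_Ncount t : (\sum_l Ncount I l t = t)%N.
Proof.
rewrite /Ncount exchange_big /= (eq_bigr (fun=> 1%N)) => [|s _].
  by rewrite sum_nat_const_nat muln1 subn1.
rewrite (bigD1 (I s)) //= eqxx big1 // => l.
by rewrite eq_sym => /negbTE ->.
Qed.

End Counts.

Section TrackingRun.
Variables (R : realType) (K : nat) (W : ('I_K -> R) -> 'I_K -> R).
Variables (I : nat -> 'I_K) (Y : nat -> R) (mu : 'I_K -> R) (eps : R) (t0 : nat).
Hypothesis W_sum1 : forall nu, \sum_l W nu l = 1.
Hypothesis W_ge0 : forall nu l, 0 <= W nu l.
Hypothesis tracking : RD_tracking W I Y.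
Hypothesis eps_gt0 : 0 < eps.
Hypothesis W_close : forall t l, (t0 <= t)%N -> `|W (muhat I Y t) l - W mu l| <= eps.

Lemma Ncount_gt0 l t : (K <= t)%N -> (0 < Ncount I l t)%N.
Proof.
by case: tracking => init _ le_Kt; apply: leq_trans _ (leq_Ncount I l le_Kt); rewrite init.
Qed.

Lemma sum_Ncount_nat t : \sum_l (Ncount I l t)%:R = t%:R :> R.
Proof. by rewrite -natr_sum sum_Ncount. Qed.

Lemma Ncount_le_drawn l t : (maxn K t0 <= t)%N -> I t.+1 = l ->
  (Ncount I l t)%:R <= (W mu l + eps) * t%:R + Num.sqrt t.+1%:R.
Proof.
rewrite geq_max => /andP [le_Kt le_t0t] drawn.
have [explore track] := tracking.2 t.+1 le_Kt; rewrite /= in explore track.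
have bound_ge0 : 0 <= (W mu l + eps) * t%:R.
  by rewrite mulr_ge0 // addr_ge0 // ltW.
have sqrt_ge0 := sqrtr_ge0 (t.+1%:R : R).
case: (boolP [exists l0, (Ncount I l0 t)%:R < Num.sqrt t.+1%:R - K%:R / 2 :> R]).
  move=> /existsP low; have [l0 low_l0] := low; have := explore low l0.
  rewrite drawn -(ler_nat R) => le_l_l0.
  have K_half_ge0 : 0 <= K%:R / 2 :> R by rewrite divr_ge0.
  lra.
move=> /existsP /track; rewrite drawn => max_ratio.
have le_hat : (Ncount I l t)%:R <= W (muhat I Y t) l * t%:R.
  rewrite -sum_Ncount_nat; apply: le_mul_sum_of_max_ratio => // j.
  by rewrite ltr0n Ncount_gt0.
have hat_le : W (muhat I Y t) l <= W mu l + eps.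
  by have := W_close l le_t0t; rewrite ler_distl => /andP [].
have := ler_wpM2r (ler0n R t) hat_le; lra.
Qed.

Lemma Ncount_le_envelope l t : (maxn K t0 <= t)%N ->
  (Ncount I l t)%:R <= Num.max (Ncount I l (maxn K t0))%:R
                         ((W mu l + eps) * t%:R + Num.sqrt t%:R + 1).
Proof.
move=> le_mt; have rate_ge0 : 0 <= W mu l + eps by rewrite addr_ge0 // ltW.
have rate_step s : (W mu l + eps) * s%:R <= (W mu l + eps) * s.+1%:R.
  by rewrite ler_wpM2l // ler_nat.
apply: (le_max_start_envelope (a := fun s => (Ncount I l s)%:R)
          (f := fun s => (W mu l + eps) * s%:R + Num.sqrt s%:R + 1)) le_mt
  => [s | s le_ms]; have := rate_step s.
  have : Num.sqrt s%:R <= Num.sqrt s.+1%:R :> R by rewrite ler_sqrt // ler_nat.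
  lra.
rewrite NcountS; case: eqP => [drawn | _]; last by left; rewrite addn0.
right; have := Ncount_le_drawn le_ms drawn.
rewrite natrD /=; lra.
Qed.

Lemma Ncount_eventually_le : exists T, (t0 < T)%N /\
  forall t l, (T <= t)%N -> (Ncount I l t)%:R <= (W mu l + 2 * eps) * t%:R.
Proof.
set m := maxn K t0.
have [T sqrt_small] := eventually_add_sqrt_le (m%:R + 1) eps_gt0.
exists (maxn T m.+1); split; first by rewrite leq_max ltnS leq_maxr orbT.
move=> t l; rewrite geq_max => /andP [le_Tt lt_mt].
apply: le_trans (Ncount_le_envelope l (ltnW lt_mt)) _; rewrite -/m ge_max.
have N_m_le : (Ncount I l m)%:R <= m%:R :> R by rewrite ler_nat Ncount_le.
have sqrt_le := sqrt_small t le_Tt.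
have sqrt_ge0 := sqrtr_ge0 (t%:R : R).
have Wt_ge0 := mulr_ge0 (W_ge0 mu l) (ler0n R t).
have m_ge0 := ler0n R m.
by apply/andP; split; lra.
Qed.

End TrackingRun.

Theorem lemma8 (R : realType) (K : nat) (T : tree K) (d : R -> R -> R)
  (theta : R) (W : ('I_K -> R) -> ('I_K -> R)) (mu : 'I_K -> R)
  (I : nat -> 'I_K) (Y : nat -> R) (eps : R) (t0 : nat) :
  wf_tree T ->
  (forall x y, 0 <= d x y) ->
  (forall nu, root_weight d theta T nu (W nu)) ->
  RD_tracking W I Y ->
  0 < eps -> (0 < t0)%N ->
  (forall t l, (t0 <= t)%N -> `|W (muhat I Y t) l - W mu l| <= eps) ->
  exists t1 : nat, [/\ (0 < t1)%N, (t0 <= t1)%N &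
    forall t, (t1 <= t)%N ->
      \big[Num.max/0]_(l < K) `|(Ncount I l t)%:R / t%:R - W mu l|
        <= 2 * (K%:R - 1) * eps].
Proof.
move=> _ _ root_w tracking eps_gt0 _ W_close.
have W_sum1 nu : \sum_l W nu l = 1 by have [] := wvalid_distribution (root_w nu).
have W_ge0 nu : forall l, 0 <= W nu l by have [] := wvalid_distribution (root_w nu).
have [T1 [lt_t0T1 N_le]] := Ncount_eventually_le W_sum1 W_ge0 tracking eps_gt0 W_close.
exists T1; split => [||t le_T1t]; [lia | lia |].
have t_gt0 : 0 < t%:R :> R by rewrite ltr0n; lia.
have K_ge1 : 1 <= K%:R :> R by rewrite ler1n (leaf_index_gt0 T).
apply: bigmax_le => [|l _]; first by nra.
have -> : 2 * (K%:R - 1) * eps = (#|'I_K|%:R - 1) * (2 * eps) :> R.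
  by rewrite card_ord mulrA [2 * _]mulrC.
apply: (norm_le_of_sum_eq0 (x := fun j => (Ncount I j t)%:R / t%:R - W mu j)).
- by rewrite sumrB -mulr_suml sum_Ncount_nat divff ?W_sum1 ?subrr ?lt0r_neq0.
- by move=> j; rewrite lerBlDl ler_pdivrMr // N_le.
- by rewrite mulr_ge0 // ltW.
Qed.
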